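(* Let $R$ be a commutative ring with identity. If $\gamma_t(\Gamma(R))=3$, then $\gamma(\Gamma(R))=3$.
   Context: All rings are commutative with identity. The zero-divisor graph $\Gamma(R)$ has vertex set $Z(R)^*$ (nonzero zero-divisors); distinct $r,s$ are adjacent iff $rs=0$, and $x$ is adjacent to itself iff $x^2=0$. A dominating set is $X\subseteq Z(R)^*$ such that every vertex not in $X$ is adjacent to some element of $X$; a total dominating set is $X$ such that every vertex (including those in $X$) is adjacent to some element of $X$ (self-adjacency counts). $\gamma,\gamma_t$ are the respective minimum cardinalities. *)

From mathcomp Require Import all_boot all_algebra.
Set Implicit Arguments. Unset Strict Implicit. Unset Printing Implicit Defensive.
Import GRing.Theory.
Local Open Scope ring_scope.

(* Vertices of the zero-divisor graph: nonzero zero-divisors Z(R)^*. *)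
Definition zdstar (R : comPzRingType) (x : R) : Prop :=
  x != 0 /\ exists y : R, y != 0 /\ x * y = 0.

(* Adjacency in Gamma(R): r ~ s iff r s = 0 (for r = s this is the loop r^2 = 0). *)
Definition zd_adj (R : comPzRingType) (x y : R) : Prop := x * y = 0.

(* Finite vertex sets are represented by duplicate-free sequences. *)
Definition dominating (R : comPzRingType) (X : seq R) : Prop :=
  (forall x, x \in X -> zdstar x) /\
  (forall v, zdstar v -> v \notin X -> exists2 x, x \in X & zd_adj v x).

Definition total_dominating (R : comPzRingType) (X : seq R) : Prop :=
  (forall x, x \in X -> zdstar x) /\
  (forall v, zdstar v -> exists2 x, x \in X & zd_adj v x).

(* gamma(Gamma(R)) = n : a dominating set of size n exists and every
   (finite) dominating set has at least n elements (infinite ones trivially do). *)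
Definition domination_number_eq (R : comPzRingType) (n : nat) : Prop :=
  (exists X : seq R, [/\ uniq X, size X = n & dominating X]) /\
  (forall X : seq R, uniq X -> dominating X -> (n <= size X)%N).

Definition total_domination_number_eq (R : comPzRingType) (n : nat) : Prop :=
  (exists X : seq R, [/\ uniq X, size X = n & total_dominating X]) /\
  (forall X : seq R, uniq X -> total_dominating X -> (n <= size X)%N).

(* If a dominating set {a, b} (or {a}) of Gamma(R) existed, a total
   dominating set with two vertices would exist too, contradicting
   gamma_t = 3.  For {a}: take a together with any neighbour of a.  For
   {a, b}: every vertex outside {a, b} kills a b; if a b = 0 then {a, b}
   itself is total, otherwise a b is a vertex adjacent to a or to b (or
   equal to one of them), say to a, and then {a b, d} with b d = 0 is total. *)
From mathcomp Require Import all_boot all_algebra.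
Set Implicit Arguments.
Unset Strict Implicit.
Unset Printing Implicit Defensive.
Import GRing.Theory.
Local Open Scope ring_scope.

Section ZeroDivisorGraph.

Variable R : comPzRingType.
Implicit Types (a b x y v : R) (X : seq R).

Lemma zdstar_neighbour x : zdstar x -> exists2 y, zdstar y & x * y = 0.
Proof.
move=> [x0 [y [y0 xy]]]; exists y => //.
by split=> //; exists x; rewrite mulrC.
Qed.

Lemma zdstar_mulr a b y : a * b != 0 -> a * y = 0 -> y != 0 -> zdstar (a * b).
Proof. by move=> ab0 ay y0; split=> //; exists y; rewrite mulrAC ay mul0r. Qed.

Lemma total_dominating_dominating X : total_dominating X -> dominating X.
Proof. by move=> [XV Xdom]; split=> // v /Xdom. Qed.

Lemma total_dominating_undup X : total_dominating X -> total_dominating (undup X).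
Proof.
move=> [XV Xdom]; split=> [x|v /Xdom [x Xx vx]]; rewrite ?mem_undup; first exact: XV.
by exists x; rewrite ?mem_undup.
Qed.

Lemma total_dominating_pair x y :
  zdstar x -> zdstar y -> (forall v, zdstar v -> v * x = 0 \/ v * y = 0) ->
  total_dominating [:: x; y].
Proof.
move=> xV yV xy_dom; split=> [z|v /xy_dom [vx|vy]].
- by rewrite !inE => /orP [] /eqP ->.
- by exists x; rewrite ?mem_head.
- by exists y; rewrite // !inE eqxx orbT.
Qed.

Lemma no_total_dominating_pair x y :
  (forall X, uniq X -> total_dominating X -> (3 <= size X)%N) ->
  ~ total_dominating [:: x; y].
Proof.
move=> minT /total_dominating_undup /(minT _ (undup_uniq _)).
by apply/negP; rewrite -ltnNge (leq_ltn_trans (size_undup _)).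
Qed.

Lemma dominating_nil v : dominating ([::] : seq R) -> ~ zdstar v.
Proof. by move=> [_ dom] /dom [] // x; rewrite in_nil. Qed.

Lemma dominating1_total_pair a :
  dominating [:: a] -> exists x y, total_dominating [:: x; y].
Proof.
move=> dom_a; have aV := dom_a.1 a (mem_head _ _).
have [y yV ay] := zdstar_neighbour aV.
exists a, y; apply: total_dominating_pair => // v vV.
have [->|va] := eqVneq v a; first by right.
left; have /(dom_a.2 v vV) [x] : v \notin [:: a] by rewrite inE.
by rewrite inE => /eqP ->.
Qed.

Lemma dominating_eq_mem X Y : X =i Y -> dominating X -> dominating Y.
Proof.
move=> XY [XV dom]; split=> [x|v vV]; rewrite -XY; first exact: XV.
by move=> /(dom v vV) [x Xx vx]; exists x; rewrite -?XY.
Qed.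

Section DominatingPair.

Variables a b : R.
Hypothesis dom_ab : dominating [:: a; b].

Lemma dominating2_adj v : zdstar v -> v != a -> v != b -> v * a = 0 \/ v * b = 0.
Proof.
move=> vV va vb; have /(dom_ab.2 v vV) [x] : v \notin [:: a; b].
  by rewrite !inE negb_or va vb.
by rewrite /zd_adj !inE => /orP [] /eqP ->; [left | right].
Qed.

Lemma dominating2_annihilates v : zdstar v -> v != a -> v != b -> v * (a * b) = 0.
Proof.
move=> vV va vb; case: (dominating2_adj vV va vb) => [va0|vb0].
  by rewrite mulrA va0 mul0r.
by rewrite mulrCA vb0 mulr0.
Qed.

(* [a * b = a] plays the role of the loop at [a * b] when [a * b] coincides
   with [a]: it still gives [a * d = 0]. *)
Lemma dominating2_total_pair_left d :
  zdstar d -> b * d = 0 -> a * b != 0 -> a * (a * b) = 0 \/ a * b = a ->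
  total_dominating [:: a * b; d].
Proof.
move=> dV bd ab0 ab_a; have [c cV ac] := zdstar_neighbour (dom_ab.1 a (mem_head _ _)).
apply: total_dominating_pair (zdstar_mulr ab0 ac cV.1) dV _ => v vV.
have [->|va] := eqVneq v a.
  by case: ab_a => [|e]; [left | right; rewrite -e -mulrA bd mulr0].
have [->|vb] := eqVneq v b; first by right.
by left; apply: dominating2_annihilates.
Qed.

End DominatingPair.

Lemma dominating2_total_pair a b :
  dominating [:: a; b] -> exists x y, total_dominating [:: x; y].
Proof.
move=> dom_ab; have dom_ba : dominating [:: b; a].
  by apply: dominating_eq_mem dom_ab => x; rewrite !inE orbC.
have aV := dom_ab.1 a (mem_head _ _); have bV := dom_ba.1 b (mem_head _ _).
have [ab0|ab0] := eqVneq (a * b) 0.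
  exists a, b; apply: total_dominating_pair => // v vV.
  have [->|va] := eqVneq v a; first by right.
  have [->|vb] := eqVneq v b; first by left; rewrite mulrC.
  exact: dominating2_adj.
have [c cV ac] := zdstar_neighbour aV; have [d dV bd] := zdstar_neighbour bV.
have abV := zdstar_mulr ab0 ac cV.1.
have ab_cases : (a * (a * b) = 0 \/ a * b = a) \/ (b * (b * a) = 0 \/ b * a = b).
  rewrite [b * a]mulrC.
  have [e|ea] := eqVneq (a * b) a; first by left; right.
  have [e|eb] := eqVneq (a * b) b; first by right; right.
  by case: (dominating2_adj dom_ab abV ea eb); rewrite ![_ * (a * b)]mulrC; auto.
case: ab_cases => [ab_a|ba_b].
  by exists (a * b), d; apply: dominating2_total_pair_left.
exists (a * b), c; rewrite mulrC.
by apply: (dominating2_total_pair_left dom_ba); rewrite // mulrC.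
Qed.

End ZeroDivisorGraph.

Theorem proposition4p1 (R : comPzRingType) :
  total_domination_number_eq R 3 -> domination_number_eq R 3.
Proof.
move=> [[T [uniqT sizeT totT]] minT]; split.
  by exists T; split=> //; apply: total_dominating_dominating.
move=> X _ domX; case: X domX => [|a [|b [|c X]]] // domX.
- case: T sizeT totT {uniqT} => [|t T] // _ [TV _].
  by case: (dominating_nil domX (TV t (mem_head _ _))).
- by have [x [y /(no_total_dominating_pair minT)]] := dominating1_total_pair domX.
- by have [x [y /(no_total_dominating_pair minT)]] := dominating2_total_pair domX.
Qed.
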